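(* Let $A$ be a subset of a Hausdorff topological vector space over $\mathbb{R}$. Consider: (i) $A$ is topologically linearly independent; (ii) $A$ is topologically independent; (iii) $A$ is linearly independent. Then (i) implies (ii) and (ii) implies (iii). Moreover, if $A$ is finite, then (i), (ii), (iii) are equivalent.
   Context: Let $X$ be a topological vector space with zero $0$. A subset $A\subseteq X\setminus\{0\}$ is topologically linearly independent if for every neighborhood $W$ of $0$ there is a neighborhood $U$ of $0$ such that for every finite $F\subseteq A$ and reals $\{r_a: a\in F\}$, $\sum_{a\in F}r_a a\in U$ implies $r_a a\in W$ for all $a\in F$. A subset $A\subseteq X\setminus\{0\}$ is topologically independent if the same holds with the reals $r_a$ replaced by integers $z_a$. *)

From HB Require Import structures.
From mathcomp Require Import all_boot all_order all_algebra.
From mathcomp Require Import all_classical all_reals all_analysis.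
Set Implicit Arguments. Unset Strict Implicit. Unset Printing Implicit Defensive.
Import Order.TTheory GRing.Theory Num.Theory.
Local Open Scope classical_set_scope.
Local Open Scope ring_scope.

(* A finite subset F of A is represented by a duplicate-free sequence s
   whose elements lie in A; coefficients by a function on E. *)

Definition top_lin_indep (R : realType) (E : topologicalLmodType R) (A : set E) : Prop :=
  A `<=` ~` [set 0] /\
  forall W : set E, nbhs (0 : E) W ->
  exists U : set E, nbhs (0 : E) U /\
    forall (s : seq E) (r : E -> R), uniq s -> (forall a, a \in s -> A a) ->
      U (\sum_(a <- s) r a *: a) -> forall a, a \in s -> W (r a *: a).

Definition top_indep (R : realType) (E : topologicalLmodType R) (A : set E) : Prop :=
  A `<=` ~` [set 0] /\
  forall W : set E, nbhs (0 : E) W ->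
  exists U : set E, nbhs (0 : E) U /\
    forall (s : seq E) (z : E -> int), uniq s -> (forall a, a \in s -> A a) ->
      U (\sum_(a <- s) a *~ z a) -> forall a, a \in s -> W (a *~ z a).

Definition lin_indep (R : realType) (E : topologicalLmodType R) (A : set E) : Prop :=
  forall (s : seq E) (r : E -> R), uniq s -> (forall a, a \in s -> A a) ->
    \sum_(a <- s) r a *: a = 0 -> forall a, a \in s -> r a = 0.

(* (i) => (ii) holds because integers are reals.

   (ii) => (iii): let sum_a c_a a = 0 with c_b = 1.  In a Hausdorff space, b
   lies outside some balanced neighbourhood of 0, and since a nonzero integer
   multiple m b of b can be scaled back to b by 1/m, topological independence
   yields a neighbourhood U of 0 in which every integer combination of A has
   zero b-coefficient.  By Dirichlet's simultaneous approximation there are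
   n >= 1 and integers m_a with all |n c_a - m_a| small, so that
   sum_a m_a a = sum_a (m_a - n c_a) a lies in U; hence m_b = 0, contradicting
   |n - m_b| < 1.

   (iii) => (i) for finite A = {a_1, ..., a_n}: v |-> sum_i v_i a_i is
   continuous, homogeneous and injective on R^n, so it maps the compact unit
   sphere onto a compact set missing 0.  A balanced neighbourhood of 0 avoiding
   this set only contains images of vectors of norm < 1, i.e. the coordinates
   are continuous at 0 on the span of A. *)

From HB Require Import structures.
From mathcomp Require Import all_boot all_order all_algebra.
From mathcomp Require Import all_classical all_reals all_analysis.
From mathcomp Require Import ring lra.
Set Implicit Arguments. Unset Strict Implicit. Unset Printing Implicit Defensive.
Import Order.TTheory GRing.Theory Num.Theory.
Import numFieldNormedType.Exports.
Local Open Scope classical_set_scope.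
Local Open Scope ring_scope.

Lemma big_seq_subset (V : nmodType) (T : eqType) (s t : seq T) (F : T -> V) :
  uniq s -> uniq t -> {subset t <= s} ->
  \sum_(b <- t) F b = \sum_(b <- s | b \in t) F b.
Proof.
move=> s_uniq t_uniq ts; rewrite -[RHS]big_filter; apply: perm_big.
apply: uniq_perm; rewrite ?filter_uniq // => b.
by rewrite mem_filter andb_idr //; exact: ts.
Qed.

Lemma nat_pigeonhole (T : finType) (g : nat -> T) :
  exists n1 n2, (n1 < n2)%N /\ g n1 = g n2.
Proof.
have /injectivePn[i [j ij gij]] : ~~ injectiveb (fun i : 'I_#|T|.+1 => g i).
  by apply/injectiveP => /leq_card; rewrite card_ord ltnn.
have [lt_ij|lt_ji|/val_inj eq_ij] := ltngtP i j.
- by exists i, j.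
- by exists j, i.
- by rewrite eq_ij eqxx in ij.
Qed.

Section Dirichlet.
Variable R : archiRealFieldType.

Lemma eq_truncn_dist (x y : R) : 0 <= x -> 0 <= y ->
  Num.truncn x = Num.truncn y -> `|x - y| < 1.
Proof.
move=> /truncn_itv/andP[x_ge x_lt] /truncn_itv/andP[y_ge y_lt] xy.
rewrite xy -natr1 in x_ge x_lt; rewrite -natr1 in y_lt.
by rewrite ltr_norml; apply/andP; split; lra.
Qed.

Lemma dirichlet_approx (I : finType) (c : I -> R) (e : R) : 0 < e ->
  exists2 n : nat, (0 < n)%N &
    exists m : I -> int, forall i, `|n%:R * c i - (m i)%:~R| < e.
Proof.
move=> e_gt0; pose q := Num.truncn e^-1.
have q_gt0 : 0 < q.+1%:R :> R by rewrite ltr0n.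
have q_lt_e : q.+1%:R^-1 < e.
  by rewrite -[e]invrK ltf_pV2 ?posrE ?invr_gt0 // truncnS_gt.
pose frac (x : R) := x - (Num.floor x)%:~R.
have frac_ge0 x : 0 <= frac x by rewrite subr_ge0 floor_le.
have frac_lt1 x : frac x < 1.
  by rewrite ltrBlDl -[1]/(1%:~R) -rmorphD floorD1_gt.
pose bin n i := Num.truncn (q.+1%:R * frac (n%:R * c i)).
have bin_lt n i : (bin n i < q.+1)%N.
  by rewrite truncn_lt_nat ?mulr_ge0 // gtr_pMr.
have [n1 [n2 [lt12 eq_bin]]] :=
  nat_pigeonhole (fun n => [ffun i => Ordinal (bin_lt n i)]).
exists (n2 - n1)%N; first by rewrite subn_gt0.
exists (fun i => Num.floor (n2%:R * c i) - Num.floor (n1%:R * c i)) => i.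
have /eq_truncn_dist : bin n2 i = bin n1 i.
  move/(congr1 (fun f : {ffun I -> 'I_q.+1} => val (f i))): eq_bin.
  by rewrite !ffunE.
rewrite !mulr_ge0 // => /(_ isT isT).
rewrite -mulrBr normrM gtr0_norm // -ltr_pdivlMl // mulr1 => frac_close.
apply: (lt_trans _ q_lt_e).
rewrite natrB ?(ltnW lt12) // intrB.
suff -> : (n2%:R - n1%:R) * c i - ((Num.floor (n2%:R * c i))%:~R -
    (Num.floor (n1%:R * c i))%:~R) = frac (n2%:R * c i) - frac (n1%:R * c i).
  exact: frac_close.
by rewrite /frac; ring.
Qed.

End Dirichlet.

Section TopologicalLmodule.
Variables (R : realFieldType) (E : topologicalLmodType R).

Lemma near0_scaler_nbhs0 (W : set E) (a : E) :
  nbhs 0 W -> \forall t \near (0 : R^o), W (t *: a).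
Proof.
move=> W0; have /= := scale_continuous ((0 : R^o), a) W.
rewrite scale0r => /(_ W0) [[P Q] [/= P0 Qa] PQ].
apply: filterS P0 => t Pt; apply: (PQ (t, a)); split=> //.
exact: nbhs_singleton.
Qed.

Lemma nbhs0_scaler_preimage (U : set E) (c : R) :
  nbhs 0 U -> nbhs 0 [set x | U (c *: x)].
Proof.
move=> U0; have /= := scale_continuous ((c : R^o), (0 : E)) U.
rewrite scaler0 => /(_ U0) [[P Q] [/= Pc Q0] PQ].
apply: filterS Q0 => x Qx; apply: (PQ (c, x)); split=> //.
exact: nbhs_singleton.
Qed.

Lemma nbhs0_splitD (U : set E) : nbhs 0 U ->
  exists U1 U2,
    [/\ nbhs 0 U1, nbhs 0 U2 & forall x y, U1 x -> U2 y -> U (x + y)].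
Proof.
move=> U0; have /= := add_continuous ((0 : E), (0 : E)) U.
rewrite addr0 => /(_ U0) [[P Q] [/= P0 Q0] PQ].
by exists P, Q; split=> // x y Px Qy; apply: (PQ (x, y)).
Qed.

Lemma nbhs0_balanced (V : set E) : nbhs 0 V ->
  exists2 W, nbhs 0 W & forall x t, W x -> `|t| <= 1 -> V (t *: x).
Proof.
move=> V0; have /= := scale_continuous ((0 : R^o), (0 : E)) V.
rewrite scaler0 => /(_ V0) [[P Q] [/= /nbhs_norm0P[e e_gt0 eP] Q0] PQ].
have e2_gt0 : 0 < e / 2 by rewrite divr_gt0.
exists [set x | Q ((e / 2)^-1 *: x)]; first exact: nbhs0_scaler_preimage.
move=> x t Qx t_le1.
have -> : t *: x = (t * (e / 2)) *: ((e / 2)^-1 *: x).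
  by rewrite scalerA -mulrA mulfV ?mulr1 // gt_eqF.
apply: (PQ (t * (e / 2), _)); split=> //=; apply: eP => /=.
rewrite normrM (gtr0_norm e2_gt0).
apply: le_lt_trans (ler_piMl (ltW e2_gt0) t_le1) _.
by rewrite ltr_pdivrMr // ltr_pMr // ltr1n.
Qed.

Lemma nbhs0_small_combination (s : seq E) (U : set E) : nbhs 0 U ->
  exists2 d : R, 0 < d & forall r : E -> R,
    (forall a, a \in s -> `|r a| < d) -> U (\sum_(a <- s) r a *: a).
Proof.
elim: s U => [|a s IH] U U0.
  by exists 1 => // r _; rewrite big_nil; exact: nbhs_singleton.
have [U1 [U2 [U10 U20 U12]]] := nbhs0_splitD U0.
have /nbhs_norm0P[d1 d1_gt0 U1d1] := near0_scaler_nbhs0 a U10.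
have [d2 d2_gt0 U2d2] := IH _ U20.
exists (Num.min d1 d2) => [|r small]; first by rewrite lt_min d1_gt0.
have {}small b : b \in a :: s -> `|r b| < d1 /\ `|r b| < d2.
  by move=> /small; rewrite lt_min => /andP.
rewrite big_cons; apply: U12; first exact/U1d1/(small a (mem_head _ _)).1.
by apply: U2d2 => b bs; apply: (small b _).2; rewrite inE bs orbT.
Qed.

Lemma continuousD_lmod (T : topologicalType) (f g : T -> E) :
  continuous f -> continuous g -> continuous (f \+ g).
Proof.
move=> cf cg x; apply: (continuous_comp (f := fun x => (f x, g x))
  (g := fun z : E * E => z.1 + z.2)); last exact: add_continuous.
exact: cvg_pair (cf x) (cg x).
Qed.

Lemma continuousZl_lmod (T : topologicalType) (f : T -> R) (a : E) :
  continuous f -> continuous (fun t => f t *: a).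
Proof.
move=> cf x; apply: (continuous_comp (f := fun x => ((f x : R^o), a))
  (g := fun z : R^o * E => z.1 *: z.2)); last exact: scale_continuous.
apply: (@cvg_pair _ _ _ _ (nbhs (f x : R^o)) (nbhs a)); first exact: cf.
exact: cvg_cst.
Qed.

Lemma continuous_sum_lmod (T : topologicalType) (I : Type) (s : seq I)
    (F : I -> T -> E) :
  (forall i, continuous (F i)) -> continuous (fun t => \sum_(i <- s) F i t).
Proof.
move=> cF; elim: s => [|i s IH].
  by under eq_fun do rewrite big_nil; exact: cst_continuous.
by under eq_fun do rewrite big_cons; exact: continuousD_lmod.
Qed.

End TopologicalLmodule.

Lemma mx_coord_le_norm (K : realDomainType) m n (A : 'M[K]_(m, n)) i j :
  `|A i j| <= `|A|.
Proof.
by rewrite [leRHS]/Num.norm /= mx_normrE; exact: (le_bigmax _ _ (i, j)).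
Qed.

Lemma compact_rV_sphere (R : realType) n :
  compact [set v : 'rV[R]_n | `|v| = 1].
Proof.
apply: bounded_closed_compact.
  by exists 1; split=> [|M M_gt1 v /= ->]; [exact: num_real | exact: ltW].
exact: (continuous_closedP _).1 (@norm_continuous _ 'rV[R]_n) _ (@closed_eq R 1).
Qed.

Lemma nbhs0_image_norm_lt (R : realType) (E : topologicalLmodType R) n
    (f : 'rV[R]_n -> E) :
  hausdorff_space E -> continuous f -> scalable f ->
  (forall v, f v = 0 -> v = 0) ->
  forall eps, 0 < eps -> exists2 U, nbhs 0 U & forall v, U (f v) -> `|v| < eps.
Proof.
move=> hE f_cont f_scal f_ker eps eps_gt0.
pose S := [set v : 'rV[R]_n | `|v| = 1].
have fS_closed : closed (f @` S).
  apply: (compact_closed hE); apply: continuous_compact.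
    exact: continuous_subspaceT.
  exact: compact_rV_sphere.
have fS_0 : nbhs 0 (~` (f @` S)).
  apply: open_nbhs_nbhs; split; first exact: closed_openC.
  move=> [v Sv /f_ker v0]; move: Sv; rewrite /S /= v0 normr0 => /eqP.
  by rewrite eq_sym oner_eq0.
have [W W0 W_bal] := nbhs0_balanced fS_0.
exists [set y | W (eps^-1 *: y)]; first exact: nbhs0_scaler_preimage.
move=> v /= Wv; rewrite ltNge; apply/negP => eps_le.
have w_ge1 : 1 <= `|eps^-1 *: v|.
  by rewrite normrZ normfV gtr0_norm // ler_pdivlMl // mulr1.
have w_gt0 : 0 < `|eps^-1 *: v| := lt_le_trans ltr01 w_ge1.
apply: (W_bal _ `|eps^-1 *: v|^-1 Wv).
  by rewrite normfV normr_id invr_le1 ?unitf_gt0.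
exists (`|eps^-1 *: v|^-1 *: (eps^-1 *: v)); last by rewrite !f_scal.
by rewrite /S /= normrZ normfV normr_id mulVf ?gt_eqF.
Qed.

Section Independence.
Variables (R : realType) (E : topologicalLmodType R).
Implicit Type A : set E.

Lemma top_lin_indep_top_indep A : top_lin_indep A -> top_indep A.
Proof.
case=> A0 tli; split=> // W W0; have [U [U0 HU]] := tli W W0.
exists U; split=> // s z s_uniq sA Us a a_s.
rewrite -scaler_int; apply: (HU s (fun a => (z a)%:~R)) => //.
by under eq_bigr do rewrite scaler_int.
Qed.

Lemma lin_indep_neq0 A : lin_indep A -> A `<=` ~` [set 0].
Proof.
move=> li a Aa /= a0.
have sA b : b \in [:: a] -> A b by rewrite mem_seq1 => /eqP ->.
have := li [:: a] (fun _ => 1) isT sA; rewrite big_seq1 scale1r.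
by move=> /(_ a0 a (mem_head _ _)) /eqP; rewrite oner_eq0.
Qed.

Variable hE : hausdorff_space E.

Lemma top_indep_nbhs0_int_comb A b : top_indep A -> A b ->
  exists2 U, nbhs 0 U & forall (s : seq E) (z : E -> int), uniq s ->
    (forall a, a \in s -> A a) -> b \in s ->
    U (\sum_(a <- s) a *~ z a) -> z b = 0.
Proof.
case=> A0 ti Ab.
have b0 : (0 : E) != b by apply/eqP => b0; exact: A0 _ Ab (esym b0).
have [V [oV + +]] := hausdorff_accessible hE b0; rewrite !in_setE => V0 Vb.
have [W W0 W_bal] := nbhs0_balanced (open_nbhs_nbhs (conj oV V0)).
have [U [U0 HU]] := ti W W0.
exists U => // s z s_uniq sA b_s Us; apply: contra_notP Vb => /eqP zb0.
have zb_ge1 : 1 <= `|(z b)%:~R : R|.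
  by rewrite -intr_norm ler1z -gtz0_ge1 normr_gt0.
have := W_bal _ (z b)%:~R^-1 (HU s z s_uniq sA Us b b_s).
rewrite -[b *~ z b]scaler_int scalerA mulVf ?intr_eq0 // scale1r; apply.
by rewrite normfV invf_le1 // (lt_le_trans ltr01).
Qed.

Lemma top_indep_lin_indep A : top_indep A -> lin_indep A.
Proof.
move=> ti s r s_uniq sA rel0 b b_s; apply/eqP/contraT => rb0.
have [U U0 U_int] := top_indep_nbhs0_int_comb ti (sA b b_s).
have [d d_gt0 U_small] := nbhs0_small_combination s U0.
pose c a := r a / r b.
have cb : c b = 1 by rewrite /c mulfV.
have c_rel : \sum_(a <- s) c a *: a = 0.
  under eq_bigr do rewrite /c mulrC -scalerA.
  by rewrite -scaler_sumr rel0 scaler0.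
(* [d] puts the error combination into [U]; [1] keeps [z b] within 1 of
   [n >= 1], so that [z b = 0] is absurd. *)
have e_gt0 : 0 < Num.min d 1 by rewrite lt_min d_gt0 ltr01.
have [n n_gt0 [m close]] :=
  dirichlet_approx (fun a : seq_sub s => c (val a)) e_gt0.
pose z a := if insub a is Some x then m x else 0.
have z_close a : a \in s -> `|n%:R * c a - (z a)%:~R| < Num.min d 1.
  by move=> a_s; rewrite /z insubT; exact: (close (Sub a a_s)).
have Uz : U (\sum_(a <- s) a *~ z a).
  have -> : \sum_(a <- s) a *~ z a =
            \sum_(a <- s) ((z a)%:~R - n%:R * c a) *: a.
    under [RHS]eq_bigr do rewrite scalerBl -scalerA.
    rewrite sumrB -scaler_sumr c_rel scaler0 subr0.
    by apply: eq_bigr => a _; rewrite scaler_int.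
  apply: U_small => a a_s; rewrite distrC.
  by have := z_close a a_s; rewrite lt_min => /andP[].
have := z_close b b_s; rewrite cb mulr1 (U_int s z s_uniq sA b_s Uz) subr0.
by rewrite normr_nat lt_min ltrn1 ltnNge n_gt0 andbF.
Qed.

Lemma lin_indep_rV_ker A (s : seq E) : lin_indep A -> uniq s ->
  (forall a, a \in s -> A a) ->
  forall v : 'rV[R]_(size s), \sum_i v ord0 i *: s`_i = 0 -> v = 0.
Proof.
move=> li s_uniq sA v v0; apply/rowP => j; rewrite mxE.
pose r a := v ord0 (insubd j (index a s)).
have r_nth (i : 'I_(size s)) : r s`_i = v ord0 i.
  by congr (v ord0 _); apply: val_inj; rewrite val_insubd index_uniq // ltn_ord.
have := li s r s_uniq sA; rewrite (big_nth 0) big_mkord.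
under eq_bigr do rewrite r_nth.
by move=> /(_ v0 _ (mem_nth 0 (ltn_ord j))); rewrite r_nth.
Qed.

Lemma finite_lin_indep_top_lin_indep A :
  finite_set A -> lin_indep A -> top_lin_indep A.
Proof.
move=> /finite_seqP[s0 As0] li; split=> [|W W0]; first exact: lin_indep_neq0.
pose s := undup s0; have s_uniq : uniq s := undup_uniq s0.
have As a : A a <-> a \in s by rewrite As0 mem_undup.
have sA a : a \in s -> A a by move/As.
pose f (v : 'rV[R]_(size s)) := \sum_i v ord0 i *: s`_i.
have f_cont : continuous f.
  apply: continuous_sum_lmod => i; apply: continuousZl_lmod.
  exact: coord_continuous.
have f_scal : scalable f.
  move=> c v; rewrite /f scaler_sumr.
  by apply: eq_bigr => i _; rewrite mxE scalerA.
have /nbhs_norm0P[eps eps_gt0 W_eps] :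
    \forall t \near (0 : R^o), forall i : 'I_(size s), W (t *: s`_i).
  exact: (filter_forall _ (fun i : 'I_(size s) => near0_scaler_nbhs0 s`_i W0)).
have [U U0 U_small] := nbhs0_image_norm_lt hE f_cont f_scal
  (lin_indep_rV_ker li s_uniq sA) eps_gt0.
exists U; split=> // t r t_uniq tA Ut a a_t.
have ts b : b \in t -> b \in s by move/tA/As.
pose v : 'rV[R]_(size s) := \row_i (if s`_i \in t then r s`_i else 0).
have fv : f v = \sum_(b <- t) r b *: b.
  rewrite (big_seq_subset _ s_uniq t_uniq ts) big_mkcond (big_nth 0) big_mkord.
  by apply: eq_bigr => i _; rewrite mxE; case: ifP; rewrite ?scale0r.
have a_idx : (index a s < size s)%N by rewrite index_mem ts.
have ra_small : `|r a| < eps.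
  have := mx_coord_le_norm v ord0 (Ordinal a_idx).
  rewrite mxE /= nth_index ?ts // a_t.
  by move/le_lt_trans; apply; apply: U_small; rewrite fv.
by have := W_eps _ ra_small (Ordinal a_idx); rewrite /= nth_index ?ts.
Qed.

End Independence.

Unset Implicit Arguments.

Theorem lemma3p3 (R : realType) (E : topologicalLmodType R)
  (hE : hausdorff_space E) (A : set E) :
  (top_lin_indep A -> top_indep A) /\
  (top_indep A -> lin_indep A) /\
  (finite_set A ->
     (top_lin_indep A <-> top_indep A) /\ (top_indep A <-> lin_indep A)).
Proof.
have i_ii := @top_lin_indep_top_indep R E A.
have ii_iii := @top_indep_lin_indep R E hE A.
split=> //; split=> // A_fin.
have iii_i := @finite_lin_indep_top_lin_indep R E hE A A_fin.
split; split.
- exact: i_ii.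
- by move/ii_iii/iii_i.
- exact: ii_iii.
- by move/iii_i/i_ii.
Qed.
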